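(* Let $A$ and $B$ be finite-dimensional quantum systems of dimensions $d_A$ and $d_B$, and let $U$ and $V$ be unitary operators on $AB$, with respective operator-Schmidt coefficients $u_j$ and $v_j$, each ordered into decreasing order ($u_1\geq u_2\geq\cdots$ and $v_1\geq v_2\geq\cdots$). Then $$2\left(1-\frac{\sum_j u_j v_j}{d_A d_B}\right)\leq \|U-V\|^2,$$ where $\|M\|=\max_{\|\psi\|=1}\|M|\psi\rangle\|$ is the operator norm.
   Context: The Hilbert–Schmidt inner product on operators is $(Q,P)=\mathrm{tr}(Q^\dagger P)$; an orthonormal operator basis is a set $\{Q_j\}$ with $\mathrm{tr}(Q_j^\dagger Q_k)=\delta_{jk}$. Every operator $Q$ on $AB$ has an operator-Schmidt decomposition $Q=\sum_l q_l A_l\otimes B_l$ with $q_l\geq 0$ and $\{A_l\}$, $\{B_l\}$ orthonormal operator bases for $A$ and $B$ respectively; the numbers $q_l$ (the singular values of the coefficient matrix of $Q$ in product operator bases) are the operator-Schmidt coefficients of $Q$. *)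

From HB Require Import structures.
From mathcomp Require Import all_boot all_order all_algebra.
From mathcomp Require Export mxtens.
Set Implicit Arguments. Unset Strict Implicit. Unset Printing Implicit Defensive.
Import Order.TTheory GRing.Theory Num.Theory.
Local Open Scope ring_scope.

(* Complex scalars: any numeric algebraically closed field C (e.g. R[i] for a
   real closed field R, or algC). *)

Definition adj (C : numClosedFieldType) m n (M : 'M[C]_(m, n)) : 'M[C]_(n, m) :=
  map_mx Num.conj M^T.

Definition hs (C : numClosedFieldType) n (Q P : 'M[C]_n) : C := \tr (adj Q *m P).

Definition unitary (C : numClosedFieldType) n (U : 'M[C]_n) : Prop :=
  adj U *m U = 1%:M.

Definition orthonormal_ops (C : numClosedFieldType) n k (F : 'I_k -> 'M[C]_n) : Prop :=
  forall j l, hs (F j) (F l) = (j == l)%:R.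

Definition op_basis (C : numClosedFieldType) n (F : 'I_(n ^ 2) -> 'M[C]_n) : Prop :=
  orthonormal_ops F.

(* Since the two bases have dA^2 and dB^2
   elements, the sum runs over l < min(dA^2, dB^2), pairing the first
   min(dA^2,dB^2) elements of each basis. *)
Definition op_schmidt (C : numClosedFieldType) dA dB
  (Q : 'M[C]_(dA * dB)) (q : 'I_(minn (dA ^ 2) (dB ^ 2)) -> C) : Prop :=
  exists (FA : 'I_(dA ^ 2) -> 'M[C]_dA) (FB : 'I_(dB ^ 2) -> 'M[C]_dB),
    [/\ op_basis FA, op_basis FB,
        forall l, 0 <= q l &
        Q = \sum_(l < minn (dA ^ 2) (dB ^ 2))
              q l *: tensmx (FA (widen_ord (geq_minl _ _) l))
                            (FB (widen_ord (geq_minr _ _) l))].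

Definition vnorm (C : numClosedFieldType) n (psi : 'cV[C]_n) : C :=
  sqrtC (\sum_i `|psi i 0| ^+ 2).

Definition is_opnorm (C : numClosedFieldType) n (M : 'M[C]_n) (c : C) : Prop :=
  (forall psi : 'cV[C]_n, vnorm psi = 1 -> vnorm (M *m psi) <= c) /\
  (exists2 psi : 'cV[C]_n, vnorm psi = 1 & vnorm (M *m psi) = c).

Definition nonincreasing (C : numClosedFieldType) k (u : 'I_k -> C) : Prop :=
  forall i j : 'I_k, (i <= j)%N -> u j <= u i.

(* Write U = sum_l u_l A_l (x) B_l and V = sum_m v_m A'_m (x) B'_m.  Then
   tr(U^* V) = sum_{l,m} u_l v_m (A_l, A'_m) (B_l, B'_m), so by AM-GM
   |tr(U^* V)| <= sum_{l,m} u_l v_m P_lm with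
   P_lm = (|(A_l, A'_m)|^2 + |(B_l, B'_m)|^2) / 2.  Bessel's inequality makes P
   doubly substochastic, and for such P and nonincreasing nonnegative u, v,
   Abel summation in l followed by the bathtub principle in m gives
   sum_{l,m} u_l v_m P_lm <= sum_j u_j v_j.  Finally, for unitaries
   ||U - V||_2^2 = 2 d_A d_B - 2 Re tr(U^* V), and column by column the
   Hilbert-Schmidt norm is at most d_A d_B times the squared operator norm. *)

From HB Require Import structures.
From mathcomp Require Import all_boot all_order all_algebra.
From mathcomp Require Import ring.
Set Implicit Arguments.
Unset Strict Implicit.
Unset Printing Implicit Defensive.

Import Order.TTheory GRing.Theory Num.Theory.
Local Open Scope ring_scope.

Section SortedWeights.
Variable R : numDomainType.

Lemma sum_widen_le n k (h : (k <= n)%N) (f : 'I_n -> R) :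
  (forall i, 0 <= f i) -> \sum_(i < k) f (widen_ord h i) <= \sum_(i < n) f i.
Proof.
move=> f_ge0; rewrite -(big_ord_narrow_cond (P := xpredT) (F := f) h) /=.
by rewrite [leRHS](bigID (fun i : 'I_n => (i < k)%N)) /= lerDl sumr_ge0.
Qed.

Lemma abel_sum_le0 n (u d : nat -> R) :
  (forall i j, (i <= j)%N -> (j < n)%N -> u j <= u i) ->
  (forall i, (i < n)%N -> 0 <= u i) ->
  (forall k, (k <= n)%N -> \sum_(l < k) d l <= 0) ->
  \sum_(l < n) u l * d l <= 0.
Proof.
elim: n u => [|n IHn] u u_decr u_ge0 d_le0; first by rewrite big_ord0.
have -> : \sum_(l < n.+1) u l * d l =
          \sum_(l < n) (u l - u n) * d l + u n * \sum_(l < n.+1) d l.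
  rewrite !big_ord_recr /= mulrDr addrA mulr_sumr -big_split /=.
  by congr (_ + _); apply: eq_bigr => i _; ring.
rewrite -[leRHS](addr0 0) lerD ?mulr_ge0_le0 ?u_ge0 ?d_le0 //.
apply: (IHn (fun l => u l - u n)) => [i j ij jn | i i_lt | k kn].
- by rewrite lerD2r u_decr // leqW.
- by rewrite subr_ge0 u_decr // ltnW.
- exact: d_le0 (leqW kn).
Qed.

Lemma bathtub_le n k (v c : nat -> R) : (k <= n)%N ->
  (forall i j, (i <= j)%N -> (j < n)%N -> v j <= v i) ->
  (forall i, (i < n)%N -> 0 <= v i) ->
  (forall i, (i < n)%N -> 0 <= c i <= 1) ->
  \sum_(i < n) c i <= k%:R ->
  \sum_(i < n) v i * c i <= \sum_(i < k) v i.
Proof.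
move=> kn v_decr v_ge0 c01 sum_c.
pose e (i : nat) : R := if (i < k)%N then 1 else 0.
pose t := if (k < n)%N then v k else 0.
have t_ge0 : 0 <= t by rewrite /t; case: ifP => // /v_ge0.
have sum_e : \sum_(i < n) e i = k%:R.
  rewrite -[in RHS](card_ord k) -sumr_const (big_ord_widen n (fun=> 1) kn).
  by rewrite [RHS]big_mkcond.
have -> : \sum_(i < k) v i = \sum_(i < n) v i * e i.
  rewrite (big_ord_widen n v kn) big_mkcond; apply: eq_bigr => i _.
  by rewrite /e; case: ifP; rewrite ?mulr1 ?mulr0.
have le_vc i : (i < n)%N -> v i * c i <= v i * e i + t * (c i - e i).
  move=> i_lt; rewrite -subr_le0.
  have -> : v i * c i - (v i * e i + t * (c i - e i)) = (v i - t) * (c i - e i)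
    by ring.
  have /andP[c_ge0 c_le1] := c01 i i_lt.
  rewrite /e /t; case: (ltnP i k) => [ik | ki].
    rewrite mulr_ge0_le0 ?subr_le0 // subr_ge0.
    by case: ifP => [kn' | _]; rewrite ?v_ge0 ?v_decr // ltnW.
  have kn' : (k < n)%N by apply: leq_ltn_trans i_lt.
  by rewrite kn' mulr_le0_ge0 ?subr0 // subr_le0 v_decr.
apply: le_trans (ler_sum _ (fun (i : 'I_n) _ => le_vc i (ltn_ord i))) _.
rewrite big_split /= -mulr_sumr sumrB sum_e gerDl.
by rewrite mulr_ge0_le0 // subr_le0.
Qed.

Lemma substochastic_pairing_nat n (u v : nat -> R) (P : nat -> nat -> R) :
  (forall i j, (i <= j)%N -> (j < n)%N -> u j <= u i) ->
  (forall i, (i < n)%N -> 0 <= u i) ->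
  (forall i j, (i <= j)%N -> (j < n)%N -> v j <= v i) ->
  (forall i, (i < n)%N -> 0 <= v i) ->
  (forall l m, (l < n)%N -> (m < n)%N -> 0 <= P l m) ->
  (forall l, (l < n)%N -> \sum_(m < n) P l m <= 1) ->
  (forall m, (m < n)%N -> \sum_(l < n) P l m <= 1) ->
  \sum_(l < n) \sum_(m < n) u l * v m * P l m <= \sum_(l < n) u l * v l.
Proof.
move=> u_decr u_ge0 v_decr v_ge0 P_ge0 row_le1 col_le1.
pose w l := \sum_(m < n) v m * P l m.
have -> : \sum_(l < n) \sum_(m < n) u l * v m * P l m = \sum_(l < n) u l * w l.
  apply: eq_bigr => l _; rewrite mulr_sumr.
  by apply: eq_bigr => m _; rewrite mulrA.
rewrite -subr_le0 -sumrB.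
under eq_bigr do rewrite -mulrBr.
apply: (abel_sum_le0 (d := fun l => w l - v l)) => // k kn.
rewrite sumrB subr_le0.
have -> : \sum_(l < k) w l = \sum_(m < n) v m * \sum_(l < k) P l m.
  by rewrite exchange_big; apply: eq_bigr => m _; rewrite mulr_sumr.
apply: (bathtub_le (c := fun m => \sum_(l < k) P l m)) => // [m mn|].
  have le_col : \sum_(l < k) P l m <= \sum_(l < n) P l m.
    by apply: (sum_widen_le (f := fun l : 'I_n => P l m) kn) => l; apply: P_ge0.
  rewrite sumr_ge0 ?(le_trans le_col) ?col_le1 // => l _.
  by apply: P_ge0 mn; apply: leq_trans kn.
rewrite exchange_big /= -[k in leRHS](card_ord k) -sumr_const.
by apply: ler_sum => l _; apply: row_le1 (leq_trans (ltn_ord l) kn).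
Qed.

Definition doubly_substochastic n (P : 'I_n -> 'I_n -> R) :=
  [/\ forall l m, 0 <= P l m,
      forall l, \sum_m P l m <= 1 &
      forall m, \sum_l P l m <= 1].

Lemma substochastic_pairing_le n (u v : 'I_n -> R) (P : 'I_n -> 'I_n -> R) :
  (forall i j : 'I_n, (i <= j)%N -> u j <= u i) -> (forall i, 0 <= u i) ->
  (forall i j : 'I_n, (i <= j)%N -> v j <= v i) -> (forall i, 0 <= v i) ->
  doubly_substochastic P ->
  \sum_l \sum_m u l * v m * P l m <= \sum_l u l * v l.
Proof.
move=> u_decr u_ge0 v_decr v_ge0 [P_ge0 row_le1 col_le1].
pose ext (f : 'I_n -> R) (i : nat) := oapp f 0 (insub i).
have extE f (i : 'I_n) : ext f i = f i by rewrite /ext valK.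
have ext_lt f i (i_lt : (i < n)%N) : ext f i = f (Ordinal i_lt).
  by rewrite /ext insubT.
have ext_decr f : (forall i j : 'I_n, (i <= j)%N -> f j <= f i) ->
    forall i j, (i <= j)%N -> (j < n)%N -> ext f j <= ext f i.
  move=> f_decr i j ij jn.
  by rewrite (ext_lt f j jn) (ext_lt f i (leq_ltn_trans ij jn)) f_decr.
have ext_ge0 f : (forall i, 0 <= f i) -> forall i, (i < n)%N -> 0 <= ext f i.
  by move=> f_ge0 i i_lt; rewrite (ext_lt f i i_lt).
pose Pn l m := ext (fun i => ext (P i) m) l.
have PnE (l m : 'I_n) : Pn l m = P l m by rewrite /Pn !extE.
have -> : \sum_l \sum_m u l * v m * P l m =
          \sum_(l < n) \sum_(m < n) ext u l * ext v m * Pn l m.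
  by apply: eq_bigr => l _; apply: eq_bigr => m _; rewrite PnE !extE.
have -> : \sum_l u l * v l = \sum_(l < n) ext u l * ext v l.
  by apply: eq_bigr => l _; rewrite !extE.
apply: substochastic_pairing_nat.
- exact: ext_decr.
- exact: ext_ge0.
- exact: ext_decr.
- exact: ext_ge0.
- by move=> l m ln mn; have := P_ge0 (Ordinal ln) (Ordinal mn); rewrite -PnE.
- move=> l ln; rewrite (eq_bigr (P (Ordinal ln))) ?row_le1 // => m _.
  exact: (PnE (Ordinal ln)).
- move=> m mn; rewrite (eq_bigr (P^~ (Ordinal mn))) ?col_le1 // => l _.
  exact: (PnE _ (Ordinal mn)).
Qed.

End SortedWeights.

Lemma doubly_substochastic_avg (R : numFieldType) n (P Q : 'I_n -> 'I_n -> R) :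
  doubly_substochastic P -> doubly_substochastic Q ->
  doubly_substochastic (fun l m => (P l m + Q l m) / 2).
Proof.
case=> P_ge0 P_row P_col [Q_ge0 Q_row Q_col].
split=> [l m | l | m]; first by rewrite divr_ge0 ?addr_ge0.
  by rewrite -mulr_suml big_split ler_pdivrMr ?mul1r ?lerD.
by rewrite -mulr_suml big_split ler_pdivrMr ?mul1r ?lerD.
Qed.

Section HilbertSchmidt.
Variable C : numClosedFieldType.

Lemma hsE n (Q P : 'M[C]_n) : hs Q P = \sum_i \sum_j (Q j i)^* * P j i.
Proof.
rewrite /hs /mxtrace; apply: eq_bigr => i _; rewrite mxE.
by apply: eq_bigr => j _; rewrite !mxE.
Qed.

Lemma hsC n (Q P : 'M[C]_n) : hs P Q = (hs Q P)^*.
Proof.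
rewrite !hsE rmorph_sum; apply: eq_bigr => i _; rewrite rmorph_sum.
by apply: eq_bigr => j _; rewrite rmorphM /= conjCK mulrC.
Qed.

Lemma hsBr n (Q P1 P2 : 'M[C]_n) : hs Q (P1 - P2) = hs Q P1 - hs Q P2.
Proof. by rewrite /hs mulmxBr raddfB. Qed.

Lemma hsBl n (Q1 Q2 P : 'M[C]_n) : hs (Q1 - Q2) P = hs Q1 P - hs Q2 P.
Proof. by rewrite hsC hsBr rmorphB /= -!hsC. Qed.

Lemma hs_sumr n k (Q : 'M[C]_n) (a : 'I_k -> C) (F : 'I_k -> 'M[C]_n) :
  hs Q (\sum_l a l *: F l) = \sum_l a l * hs Q (F l).
Proof.
rewrite /hs mulmx_sumr raddf_sum; apply: eq_bigr => l _.
by rewrite linearZ /= linearZ.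
Qed.

Lemma hs_suml n k (P : 'M[C]_n) (a : 'I_k -> C) (F : 'I_k -> 'M[C]_n) :
  hs (\sum_l a l *: F l) P = \sum_l (a l)^* * hs (F l) P.
Proof.
rewrite hsC hs_sumr rmorph_sum; apply: eq_bigr => l _.
by rewrite rmorphM /= -hsC.
Qed.

Lemma hs_ge0 n (Q : 'M[C]_n) : 0 <= hs Q Q.
Proof.
rewrite hsE; apply: sumr_ge0 => i _; apply: sumr_ge0 => j _.
by rewrite -normCKC exprn_ge0.
Qed.

Lemma mxtrace_tens m n (A : 'M[C]_m) (B : 'M[C]_n) : \tr (A *t B) = \tr A * \tr B.
Proof. by rewrite /mxtrace mulr_sum; apply: eq_bigr => k _; rewrite mxE. Qed.

Lemma hs_tens m n (A A' : 'M[C]_m) (B B' : 'M[C]_n) :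
  hs (A *t B) (A' *t B') = hs A A' * hs B B'.
Proof. by rewrite /hs /adj trmx_tens map_mxT tensmx_mul mxtrace_tens. Qed.

Lemma bessel n k (F : 'I_k -> 'M[C]_n) (Q : 'M[C]_n) : orthonormal_ops F ->
  \sum_i `|hs (F i) Q| ^+ 2 <= hs Q Q.
Proof.
move=> F_on; pose S := \sum_i hs (F i) Q *: F i.
pose T := \sum_i `|hs (F i) Q| ^+ 2.
have hsQS : hs Q S = T.
  by rewrite hs_sumr; apply: eq_bigr => i _; rewrite normCK -hsC.
have hsFS j : hs (F j) S = hs (F j) Q.
  rewrite hs_sumr (bigD1 j) //= big1 => [|i ij].
    by rewrite F_on eqxx mulr1 addr0.
  by rewrite F_on eq_sym (negbTE ij) mulr0.
have hsSS : hs S S = T.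
  by rewrite {1}/S hs_suml; apply: eq_bigr => j _; rewrite hsFS normCKC.
have hsSQ : hs S Q = T.
  by rewrite hsC hsQS geC0_conj // sumr_ge0 // => i _; rewrite exprn_ge0.
have := hs_ge0 (Q - S).
by rewrite hsBl !hsBr hsQS hsSQ hsSS subrr subr0 subr_ge0.
Qed.

Lemma norm_hsC n (Q P : 'M[C]_n) : `|hs P Q| = `|hs Q P|.
Proof. by rewrite hsC norm_conjC. Qed.

Lemma sum_overlap_le1 n k N (h : (N <= k)%N) (F : 'I_k -> 'M[C]_n) (Q : 'M[C]_n) :
  orthonormal_ops F -> hs Q Q = 1 ->
  \sum_(j < N) `|hs (F (widen_ord h j)) Q| ^+ 2 <= 1.
Proof.
move=> F_on Q_unit.
apply: le_trans (sum_widen_le (f := fun j => `|hs (F j) Q| ^+ 2) h _) _ => [j|].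
  exact: exprn_ge0.
by rewrite -Q_unit bessel.
Qed.

Lemma overlap_doubly_substochastic n k N (h : (N <= k)%N)
    (F G : 'I_k -> 'M[C]_n) :
  orthonormal_ops F -> orthonormal_ops G ->
  doubly_substochastic
    (fun l j : 'I_N => `|hs (F (widen_ord h l)) (G (widen_ord h j))| ^+ 2).
Proof.
move=> F_on G_on; split=> [l j | l | j]; first exact: exprn_ge0.
  under eq_bigr do rewrite norm_hsC.
  by apply: sum_overlap_le1; rewrite ?F_on ?eqxx.
by apply: sum_overlap_le1; rewrite ?G_on ?eqxx.
Qed.

Lemma hs_unitary n (U : 'M[C]_n) : unitary U -> hs U U = n%:R.
Proof. by rewrite /hs => ->; rewrite mxtrace1. Qed.

Lemma hs_normB n (P Q : 'M[C]_n) :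
  hs (P - Q) (P - Q) = hs P P + hs Q Q - 2 * 'Re (hs P Q).
Proof.
by rewrite hsBl !hsBr (hsC P Q) ReE mulrC divfK ?pnatr_eq0 //; ring.
Qed.

Lemma vnorm_delta n (i : 'I_n) : vnorm (delta_mx i 0 : 'cV[C]_n) = 1.
Proof.
rewrite /vnorm (bigD1 i) //= big1 => [|j ji].
  by rewrite mxE !eqxx normr1 expr1n addr0 sqrtC1.
by rewrite mxE (negbTE ji) normr0 expr0n.
Qed.

Lemma hs_self_col n (M : 'M[C]_n) : hs M M = \sum_i vnorm (col i M) ^+ 2.
Proof.
rewrite hsE; apply: eq_bigr => i _; rewrite /vnorm sqrtCK.
by apply: eq_bigr => j _; rewrite mxE normCKC.
Qed.

Lemma hs_self_le_opnorm n (M : 'M[C]_n) c :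
  is_opnorm M c -> hs M M <= n%:R * c ^+ 2.
Proof.
have vnorm_ge0 (x : 'cV[C]_n) : 0 <= vnorm x.
  by rewrite sqrtC_ge0 sumr_ge0 // => i _; rewrite exprn_ge0.
case=> M_le [psi _ Mpsi]; have c_ge0 : 0 <= c by rewrite -Mpsi.
have col_le i : vnorm (col i M) ^+ 2 <= c ^+ 2.
  by rewrite lerXn2r ?nnegrE // colE M_le ?vnorm_delta.
rewrite hs_self_col (le_trans (ler_sum _ (fun i _ => col_le i))) //.
by rewrite sumr_const card_ord mulr_natl.
Qed.

End HilbertSchmidt.

Lemma norm_hs_op_schmidt_le (C : numClosedFieldType) dA dB
    (U V : 'M[C]_(dA * dB)) u v :
  op_schmidt U u -> op_schmidt V v -> nonincreasing u -> nonincreasing v ->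
  `|hs U V| <= \sum_j u j * v j.
Proof.
case=> [FA [FB [FA_on FB_on u_ge0 ->]]] [GA [GB [GA_on GB_on v_ge0 ->]]].
move=> u_decr v_decr.
have P_ds := doubly_substochastic_avg
  (overlap_doubly_substochastic (geq_minl _ _) FA_on GA_on)
  (overlap_doubly_substochastic (geq_minr _ _) FB_on GB_on).
apply: le_trans (substochastic_pairing_le u_decr u_ge0 v_decr v_ge0 P_ds).
rewrite hs_suml; apply: le_trans (ler_norm_sum _ _ _) _; apply: ler_sum => l _.
rewrite hs_sumr mulr_sumr; apply: le_trans (ler_norm_sum _ _ _) _.
apply: ler_sum => m _; rewrite hs_tens geC0_conj // mulrA !normrM.
rewrite (ger0_norm (u_ge0 l)) (ger0_norm (v_ge0 m)).
rewrite ler_wpM2l ?mulr_ge0 //.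
exact: (real_leif_mean_square (normr_real _) (normr_real _)).1.
Qed.

Theorem proposition1 (C : numClosedFieldType) (dA dB : nat)
  (hA : (0 < dA)%N) (hB : (0 < dB)%N)
  (U V : 'M[C]_(dA * dB))
  (u v : 'I_(minn (dA ^ 2) (dB ^ 2)) -> C)
  (hU : unitary U) (hV : unitary V)
  (hu : op_schmidt U u) (hv : op_schmidt V v)
  (hud : nonincreasing u) (hvd : nonincreasing v)
  (c : C) (hc : is_opnorm (U - V) c) :
  2 * (1 - (\sum_j u j * v j) / (dA * dB)%:R) <= c ^+ 2.
Proof.
set D : C := (dA * dB)%:R; set s := \sum_j u j * v j.
have D_gt0 : 0 < D by rewrite ltr0n muln_gt0 hA hB.
have Re_le : 'Re (hs U V) <= s.
  exact: le_trans (leif_Re_Creal _).1 (norm_hs_op_schmidt_le hu hv hud hvd).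
have := hs_self_le_opnorm hc; rewrite hs_normB !hs_unitary // -/D => HS_le.
have -> : 2 * (1 - s / D) = (D + D - 2 * s) / D
  by field; rewrite !pnatr_eq0 -!lt0n hA hB.
rewrite ler_pdivrMr // [leRHS]mulrC; apply: le_trans HS_le.
by rewrite lerD2l lerN2 ler_pM2l.
Qed.
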